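(* Let $(K,\mathrm{val})$ be a $2$-henselian valued field whose residue class field $F$ has characteristic $\neq2$, let $A$ be a subring with $B\subseteq A\subseteq K$, $H=\mathrm{val}(A^\times)$, and let $\mathcal M$ be a quasi-quadratic module in $A$. Let $x\in A\setminus\{0\}$ with $\mathrm{val}(x)=g$. Then $x\in\operatorname{supp}(\mathcal M)$ if and only if $M_g^A(\mathcal M)=F$. Moreover, if $M_g^A(\mathcal M)=F$ and $h\in G$ with $h\ge g$, then $M_h^A(\mathcal M)=F$. Furthermore, the following are equivalent: (a) $\mathcal M=A$; (b) $M_g^A(\mathcal M)=F$ for all $g\in H\cup G_{\ge e}$; (c) $M_e^A(\mathcal M)=F$.
   Context: Let $(G,\le)$ be a totally ordered abelian group written multiplicatively with identity $e$; $G_{\ge e}=\{g\in G:g\ge e\}$, $G^2=\{g^2:g\in G\}$. Let $(K,\mathrm{val})$ be a valued field with surjective valuation $\mathrm{val}:K\to G\cup\{\infty\}$, valuation ring $B=\{x:\mathrm{val}(x)\ge e\}$, residue map $\pi:B\to F$, residue field $F$. A strict unit is $x\in B^\times$ with $\pi(x)=1$; when $\mathrm{char}F\ne2$, $2$-henselian is equivalent to every strict unit being a square in $K$. For a subring $A$ with $B\subseteq A\subseteq K$ put $H=\mathrm{val}(A^\times)$. For $g\in G$, $\overline g$ is its class in $G/G^2$. A quasi-quadratic module in a commutative ring $R$ is a subset $M\subseteq R$ with $M+M\subseteq M$ and $a^2M\subseteq M$ for all $a\in R$; its support is $\operatorname{supp}(M)=M\cap(-M)$. A pseudo-angular component map is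 a map $\mathrm{p.an}:K^\times\to F^\times$ such that: (1) $\mathrm{p.an}(u)=\pi(u)$ for $u\in B^\times$; (2) $\mathrm{p.an}(ux)=\pi(u)\mathrm{p.an}(x)$ for $u\in B^\times,x\in K^\times$; (3) for all $g\in G$, $c\in F^\times$ there is $w\in K$ with $\mathrm{val}(w)=g$, $\mathrm{p.an}(w)=c$; (4) for nonzero $x_1,x_2$ with $x_1+x_2\ne0$: if $\mathrm{val}(x_1)<\mathrm{val}(x_2)$ then $\mathrm{p.an}(x_1+x_2)=\mathrm{p.an}(x_1)$; if $\mathrm{val}(x_1)=\mathrm{val}(x_2)$ and $\mathrm{p.an}(x_1)+\mathrm{p.an}(x_2)\ne0$ then $\mathrm{val}(x_1+x_2)=\mathrm{val}(x_1)$ and $\mathrm{p.an}(x_1+x_2)=\mathrm{p.an}(x_1)+\mathrm{p.an}(x_2)$; (5) if $x,y\in K^\times$, $\overline{\mathrm{val}(x)}=\overline{\mathrm{val}(y)}$ and $\mathrm{p.an}(x)=\mathrm{p.an}(y)$ then $y=u^2x$ for some $u\in K^\times$; (6) for $a,u\in K^\times$ there is $k\in F^\times$ with $\mathrm{p.an}(au^2)=\mathrm{p.an}(a)k^2$. Such a map exists under the hypotheses; fix one. For a quasi-quadratic module $\mathcal M$ in $A$ and $g\in G$: $M_g^A(\mathcal M)=\{\mathrm{p.an}(x):x\in\mathcal M\setminus\{0\},\ \mathrm{val}(x)=g\}\cup\{0\}$. *)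

From mathcomp Require Import all_boot all_order all_algebra.
Set Implicit Arguments. Unset Strict Implicit. Unset Printing Implicit Defensive.
Import GRing.Theory.
Local Open Scope ring_scope.

(* ---- Totally ordered abelian group (written additively: e = 0, gh = g+h) ---- *)
Definition is_toag (G : zmodType) (le : G -> G -> Prop) : Prop :=
  [/\ (forall x, le x x),
      (forall x y, le x y -> le y x -> x = y),
      (forall x y z, le x y -> le y z -> le x z),
      (forall x y, le x y \/ le y x)
    & (forall x y z, le x y -> le (x + z) (y + z))].

(* G ∪ {∞}, with ∞ = None the top element *)
Definition oleq (G : zmodType) (le : G -> G -> Prop) (a b : option G) : Prop :=
  match a, b with
  | _, None => True
  | None, Some _ => False
  | Some x, Some y => le x y
  end.

Definition oadd (G : zmodType) (a b : option G) : option G :=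
  match a, b with
  | Some x, Some y => Some (x + y)
  | _, _ => None
  end.

Definition is_valuation (K : fieldType) (G : zmodType) (le : G -> G -> Prop)
    (val : K -> option G) : Prop :=
  [/\ (forall x, val x = None <-> x = 0),
      (forall x y, val (x * y) = oadd (val x) (val y)),
      (forall x y, oleq le (val x) (val (x + y)) \/ oleq le (val y) (val (x + y)))
    & (forall g, exists x, val x = Some g)].

Definition valring (K : fieldType) (G : zmodType) (le : G -> G -> Prop)
    (val : K -> option G) (x : K) : Prop := oleq le (Some 0) (val x).

(* pi : B -> F is the residue map (pi is total on K, only its values on B matter):
   a surjective ring morphism B -> F whose kernel is the maximal ideal
   {x | val x > e}. *)
Definition is_residue_map (K F : fieldType) (G : zmodType) (le : G -> G -> Prop)
    (val : K -> option G) (pi : K -> F) : Prop :=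
  [/\ (forall x y, valring le val x -> valring le val y -> pi (x + y) = pi x + pi y),
      (forall x y, valring le val x -> valring le val y -> pi (x * y) = pi x * pi y),
      pi 1 = 1,
      (forall x, valring le val x -> (pi x = 0 <-> ~ oleq le (val x) (Some 0)))
    & (forall c, exists x, valring le val x /\ pi x = c)].

Definition Bunit (K : fieldType) (G : zmodType) (val : K -> option G) (x : K) : Prop :=
  x <> 0 /\ val x = Some 0.

Definition strict_unit (K F : fieldType) (G : zmodType)
    (val : K -> option G) (pi : K -> F) (x : K) : Prop :=
  Bunit val x /\ pi x = 1.

(* 2-henselian, in the form valid when char F <> 2: every strict unit is a square *)
Definition two_henselian (K F : fieldType) (G : zmodType)
    (val : K -> option G) (pi : K -> F) : Prop :=
  forall x, strict_unit val pi x -> exists y, x = y ^+ 2.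

(* pseudo-angular component map pan : K^x -> F^x, axioms (1)-(6) *)
Definition is_pan (K F : fieldType) (G : zmodType) (le : G -> G -> Prop)
    (val : K -> option G) (pi : K -> F) (pan : K -> F) : Prop :=
  (forall x, x <> 0 -> pan x <> 0) /\
      (forall u, Bunit val u -> pan u = pi u) /\
      (forall u x, Bunit val u -> x <> 0 -> pan (u * x) = pi u * pan x) /\
      (forall g c, c <> 0 -> exists w, val w = Some g /\ pan w = c) /\       (* (3) *)
      (forall x1 x2 g1 g2, x1 <> 0 -> x2 <> 0 -> x1 + x2 <> 0 ->
         val x1 = Some g1 -> val x2 = Some g2 -> le g1 g2 -> g1 <> g2 ->
         pan (x1 + x2) = pan x1) /\
      (forall x1 x2, x1 <> 0 -> x2 <> 0 -> x1 + x2 <> 0 ->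
         val x1 = val x2 -> pan x1 + pan x2 <> 0 ->
         val (x1 + x2) = val x1 /\ pan (x1 + x2) = pan x1 + pan x2) /\
      (forall x y gx gy, x <> 0 -> y <> 0 -> val x = Some gx -> val y = Some gy ->
         (exists h, gx - gy = h + h) -> pan x = pan y ->
         exists u, u <> 0 /\ y = u ^+ 2 * x) /\                              (* (5) *)
    (forall a u, a <> 0 -> u <> 0 ->
         exists k, k <> 0 /\ pan (a * u ^+ 2) = pan a * k ^+ 2).

Definition is_subring (K : fieldType) (A : K -> Prop) : Prop :=
  [/\ A 0, A 1,
      (forall x y, A x -> A y -> A (x + y)),
      (forall x, A x -> A (- x))
    & (forall x y, A x -> A y -> A (x * y))].

Definition Hval (K : fieldType) (G : zmodType) (A : K -> Prop)
    (val : K -> option G) (g : G) : Prop :=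
  exists u, [/\ A u, u <> 0, A u^-1 & val u = Some g].

Definition qq_module (K : fieldType) (A M : K -> Prop) : Prop :=
  [/\ (forall x, M x -> A x),
      (forall x y, M x -> M y -> M (x + y))
    & (forall a x, A a -> M x -> M (a ^+ 2 * x))].

Definition supp (K : fieldType) (M : K -> Prop) (x : K) : Prop := M x /\ M (- x).

Definition Mg (K F : fieldType) (G : zmodType) (val : K -> option G) (pan : K -> F)
    (M : K -> Prop) (g : G) (c : F) : Prop :=
  c = 0 \/ exists x, [/\ M x, x <> 0, val x = Some g & pan x = c].

Definition full (F : fieldType) (S : F -> Prop) : Prop := forall c, S c.

From mathcomp Require Import all_boot all_order all_algebra.
From mathcomp Require Import ring.
From Stdlib Require Import Classical.
Import GRing.Theory.
Local Open Scope ring_scope.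

(* The whole theorem rests on two facts about a quasi-quadratic module M in A:
   - since 1/2 lies in B (char F <> 2 forces val 2 = e), the support of M is
     an ideal of A: for t in A, t x = ((t+1)/2)^2 x + ((t-1)/2)^2 (-x);
   - the sets M_g^A(M) are controlled by the pseudo-angular component:
     if x in supp(M) has value g and h >= g, every c in F^x is the pan of some
     w of value h (axiom 3), and w = (w/x) x lies in supp(M) since w/x is in B;
     conversely, if M_g^A(M) = F, every z of value g has the same pan as some
     y in M of value g, so z = u^2 y by axiom (5) with val u = e, i.e. z in M.
   The 2-henselian hypothesis is not invoked directly: it is what makes a
   pseudo-angular component map with axiom (5) exist, and only (5) is used. *)

Lemma toag_two_torsion_free {G : zmodType} {le : G -> G -> Prop} :
  is_toag le -> forall v : G, v + v = 0 -> v = 0.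
Proof.
case=> _ lanti _ ltot ltransl.
have ge0 (v : G) : v + v = 0 -> le 0 v.
  move=> vv; case: (ltot 0 v) => // H.
  by have := ltransl _ _ v H; rewrite add0r vv.
move=> v vv; apply: lanti; last exact: ge0.
have : le 0 (- v) by apply: ge0; rewrite -opprD vv oppr0.
by move/(ltransl _ _ v); rewrite add0r addNr.
Qed.

(* If 1/2 lies in A, the support of a quasi-quadratic module M in A is an
   ideal of A, because t x = ((t+1)/2)^2 x + ((t-1)/2)^2 (-x). *)
Lemma supp_mul {K : fieldType} {A M : K -> Prop} {x t : K} :
  (2%:R : K) != 0 -> is_subring A -> qq_module A M -> A (2%:R^-1) ->
  supp M x -> A t -> M (t * x).
Proof.
move=> two_ne0 [_ A1 AD AN AM] [_ MD MM] Ahalf [Mx MNx] At.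
have -> : t * x = ((t + 1) * 2%:R^-1) ^+ 2 * x + ((t - 1) * 2%:R^-1) ^+ 2 * (- x).
  by field.
by apply: MD; apply: MM => //; apply: AM => //; apply: AD => //; apply: AN.
Qed.

Section ValuedField.

Context {K : fieldType} {G : zmodType} {le : G -> G -> Prop} {val : K -> option G}.
Hypothesis hG : is_toag le.
Hypothesis hval : is_valuation le val.

Lemma val_neq0 {x : K} : x <> 0 -> val x <> None.
Proof. by case: hval => v0 _ _ _ nx /v0. Qed.

(* val 1 = e, since val 1 + val 1 = val 1. *)
Lemma val1 : val 1 = Some 0.
Proof.
case: hval => _ vM _ _.
case E: (val 1) => [a|]; last by have := @val_neq0 1 (elimN eqP (oner_neq0 K)).
have := vM 1 1; rewrite mulr1 E /= => -[] H.
have : a + a = a + 0 by rewrite addr0 -H.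
by move/addrI => ->.
Qed.

(* Since val (-1)^2 = e and G is 2-torsion free, val (-1) = e. *)
Lemma val_opp (x : K) : val (- x) = val x.
Proof.
case: hval => _ vM _ _.
have valN1 : val (-1) = Some 0.
  case E: (val (-1)) => [b|]; last first.
    by exfalso; apply: (@val_neq0 (-1)) E; apply/eqP; rewrite oppr_eq0 oner_eq0.
  have := vM (-1) (-1); rewrite mulrNN mulr1 E val1 /= => -[] H.
  by rewrite (toag_two_torsion_free hG b (esym H)).
by rewrite -mulN1r vM valN1; case: (val x) => //= a; rewrite add0r.
Qed.

Lemma val_inv {x : K} {g : G} : x <> 0 -> val x = Some g -> val x^-1 = Some (- g).
Proof.
case: hval => _ vM _ _ nx vx; have := vM x x^-1.
rewrite mulfV; last exact/eqP.
rewrite val1 vx; case: (val x^-1) => //= b [] H.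
by rewrite -(addKr g b) -H addr0.
Qed.

Lemma valring_add {x y : K} :
  valring le val x -> valring le val y -> valring le val (x + y).
Proof.
case: hG => _ _ ltrans _ _; case: hval => _ _ vU _.
have oltr a b c : oleq le a b -> oleq le b c -> oleq le a c.
  by case: a b c => [a|] [b|] [c|] //=; apply: ltrans.
by move=> Bx By; case: (vU x y) => H; [apply: oltr Bx H | apply: oltr By H].
Qed.

Lemma valring_div {x w : K} {g h : G} :
  x <> 0 -> val x = Some g -> val w = Some h -> le g h -> valring le val (x^-1 * w).
Proof.
case: hG => _ _ _ _ ltransl; case: hval => _ vM _ _ nx vx vw gh.
rewrite /valring vM vw (val_inv nx vx) /=.
by have := ltransl _ _ (- g) gh; rewrite subrr addrC.
Qed.

Context {F : fieldType} {res : K -> F}.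
Hypothesis hpi : is_residue_map le val res.
Hypothesis hchar : (2%:R : F) != 0.

(* When char F <> 2, the element 2 is a unit of B: its residue is nonzero. *)
Lemma val_two : val (2%:R : K) = Some 0.
Proof.
case: hG => lrefl lanti _ _ _; case: hpi => resD _ res1 resK _.
have B1 : valring le val 1 by rewrite /valring val1; apply: lrefl.
have B2 : valring le val (2%:R : K) by rewrite mulr2n; apply: valring_add.
have p2 : res (2%:R : K) <> 0 by rewrite mulr2n resD // res1 -mulr2n; apply/eqP.
have H : oleq le (val (2%:R : K)) (Some 0).
  by apply: NNPP => H; apply: p2; apply/(resK _ B2).
by move: B2 H; rewrite /valring; case: (val _) => //= a H1 H2; rewrite (lanti _ _ H2 H1).
Qed.

Lemma two_neq0 : (2%:R : K) != 0.
Proof. by case: hval => v0 _ _ _; apply/eqP => /v0; rewrite val_two. Qed.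

Lemma valring_half : valring le val (2%:R^-1 : K).
Proof.
rewrite /valring (val_inv (elimN eqP two_neq0) val_two) oppr0 /=.
by case: hG.
Qed.

Context {pan : K -> F} {A M : K -> Prop}.
Hypothesis hpan : is_pan le val res pan.
Hypothesis hA : is_subring A.
Hypothesis hBA : forall x, valring le val x -> A x.
Hypothesis hM : qq_module A M.

Lemma half_in_A : A (2%:R^-1).
Proof. exact: hBA valring_half. Qed.

(* An element of the support of M of value g forces M_h^A(M) = F for h >= g:
   a nonzero c in F is the pan of some w of value h (axiom 3), and
   w = (w/x) x with w/x in B. *)
Lemma supp_full_above {x : K} {g : G} :
  x <> 0 -> val x = Some g -> supp M x ->
  forall h, le g h -> full (Mg val pan M h).
Proof.
move=> nx vx Sx h gh c; have [->|cn] := eqVneq c 0; first by left.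
have [_ [_ [_ [pan3 _]]]] := hpan.
have [w [vw pw]] := pan3 h c (elimN eqP cn).
right; exists w; split => //; last by case: hval => v0 _ _ _ /v0; rewrite vw.
rewrite -(divfK (introN eqP nx) w); apply: (supp_mul two_neq0 hA hM half_in_A Sx).
by apply: hBA; rewrite mulrC; apply: (valring_div nx vx vw).
Qed.

(* Conversely, if M_g^A(M) = F then every z of value g lies in M: z has the
   pan of some y in M of value g, so z = u^2 y (axiom 5) with u in B. *)
Lemma full_Mg_mem {g : G} {z : K} :
  full (Mg val pan M g) -> z <> 0 -> val z = Some g -> M z.
Proof.
have [pan0 [_ [_ [_ [_ [_ [pan5 _]]]]]]] := hpan.
case: hval => _ vM _ _; case: hM => _ _ MM.
move=> Hf nz vz; case: (Hf (pan z)) => [/(pan0 _ nz)//|[y [My ny vy py]]].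
have g_sq : exists h : G, g - g = h + h by exists 0; rewrite subrr addr0.
have [u [nu ez]] := pan5 y z g g ny nz vy vz g_sq py.
rewrite ez; apply: MM => //; apply: hBA.
move: vz; rewrite ez vM expr2 vM vy.
case E: (val u) => [b|]; last by have := val_neq0 nu.
move=> /= [] H.
have bb : b + b = 0 by apply: (addIr g); rewrite add0r H.
by rewrite /valring E (toag_two_torsion_free hG _ bb) /=; case: hG.
Qed.

Lemma full_Mg_supp {g : G} {x : K} :
  full (Mg val pan M g) -> x <> 0 -> val x = Some g -> supp M x.
Proof.
move=> Hf nx vx; split; first exact: (full_Mg_mem Hf nx vx).
apply: (full_Mg_mem Hf); last by rewrite val_opp.
by move=> /eqP; rewrite oppr_eq0 => /eqP.
Qed.

Lemma value_in_A (g : G) :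
  Hval A val g \/ le 0 g -> exists x, [/\ A x, x <> 0 & val x = Some g].
Proof.
case=> [[u [Au nu _ vu]]|g_ge0]; first by exists u.
case: hval => v0 _ _ vS; have [x vx] := vS g; exists x; split => //.
  by apply: hBA; rewrite /valring vx.
by move=> x0; move: vx; rewrite x0 (proj2 (v0 0) erefl).
Qed.

(* M = A exactly when 1 lies in supp(M), i.e. when M_e^A(M) = F. *)
Lemma module_full_iff : (forall y, M y <-> A y) <-> full (Mg val pan M 0).
Proof.
have one_ne0 : (1 : K) <> 0 by apply/eqP; exact: oner_neq0.
case: hA => _ A1 _ AN _; case: hM => MA _ _; split.
- move=> MeqA; apply: (supp_full_above one_ne0 val1); last by case: hG.
  by split; apply/MeqA => //; apply: AN.
- move=> Hf y; split; first exact: MA.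
  move=> Ay; rewrite -(mulr1 y).
  exact: (supp_mul two_neq0 hA hM half_in_A (full_Mg_supp Hf one_ne0 val1)).
Qed.

End ValuedField.

Theorem mainTheorem7 (K F : fieldType) (G : zmodType) (le : G -> G -> Prop)
    (val : K -> option G) (pi : K -> F) (pan : K -> F) (A M : K -> Prop)
    (hG : is_toag le) (hval : is_valuation le val) (hpi : is_residue_map le val pi)
    (hchar : (2%:R : F) != 0) (hhens : two_henselian val pi)
    (hpan : is_pan le val pi pan)
    (hA : is_subring A) (hBA : forall x, valring le val x -> A x)
    (hM : qq_module A M) :
  (forall (x : K) (g : G), A x -> x <> 0 -> val x = Some g ->
     (supp M x <-> full (Mg val pan M g))
     /\ (full (Mg val pan M g) -> forall h, le g h -> full (Mg val pan M h)))
  /\ ((forall y, M y <-> A y) <->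
        (forall g, Hval A val g \/ le 0 g -> full (Mg val pan M g)))
  /\ ((forall g, Hval A val g \/ le 0 g -> full (Mg val pan M g)) <->
        full (Mg val pan M 0)).
Proof.
have lrefl : forall g, le g g by case: hG.
have above := supp_full_above hG hval hpi hchar hpan hA hBA hM.
have to_supp := full_Mg_supp hG hval hpan hBA hM.
have a_iff_c := module_full_iff hG hval hpi hchar hpan hA hBA hM.
have a_b : (forall y, M y <-> A y) ->
    forall g, Hval A val g \/ le 0 g -> full (Mg val pan M g).
  move=> MeqA g /(value_in_A hval hBA) [x [Ax nx vx]].
  have [_ _ _ AN _] := hA.
  by apply: (above x g nx vx _ g (lrefl g)); split; apply/MeqA => //; apply: AN.
have b_c : (forall g, Hval A val g \/ le 0 g -> full (Mg val pan M g)) ->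
    full (Mg val pan M 0) by move=> Hb; apply: Hb; right; apply: lrefl.
split.
  move=> x g _ nx vx; split; first split.
  - by move=> Sx; apply: (above x g nx vx Sx g (lrefl g)).
  - by move=> Hf; apply: (to_supp g x Hf nx vx).
  - by move=> Hf; apply: (above x g nx vx (to_supp g x Hf nx vx)).
split; split.
- exact: a_b.
- by move=> Hb; apply/a_iff_c/b_c.
- exact: b_c.
- by move=> Hc; apply/a_b/a_iff_c.
Qed.
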